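(* Let $\Phi$ be an irreducible reduced root system with basis $\Delta$, Weyl group $W$ and length function $l$, highest root $\tilde\alpha$. Let $\alpha,\beta$ be long roots. (a) If $x\in W$ satisfies $x(\beta)=\alpha$, then $l(x)\ge|L(\alpha)-L(\beta)|$. (b) There exists $x\in W$ with $x(\beta)=\alpha$ and $l(x)=|L(\alpha)-L(\beta)|$ if and only if $\alpha$ and $\beta$ are linked by a simple path (from $\beta$ to $\alpha$ or from $\alpha$ to $\beta$). In that case such an $x$ is unique; denote it $x_{\alpha\beta}$. When there is a simple path from $\beta$ to $\alpha$, the reduced expressions of $x_{\alpha\beta}$ correspond bijectively to the simple paths from $\beta$ to $\alpha$ (the path $\beta_0\xrightarrow{\gamma_1}\cdots\xrightarrow{\gamma_k}\beta_k$ corresponding to $s_{\gamma_k}\cdots s_{\gamma_1}$). (c) If $\alpha\le\beta\le\gamma$ are long roots such that $x_{\alpha\beta}$ and $x_{\beta\gamma}$ are defined, then $x_{\alpha\gamma}$ is defined, $x_{\alpha\gamma}=x_{\alpha\beta}x_{\beta\gamma}$ and $l(x_{\alpha\gamma})=l(x_{\alpha\beta})+l(x_{\beta\gamma})$. (d) For every positive long root $\alpha$, $x_{-\alpha,\alpha}$ is defined and equals $s_\alpha$. (e) For every long root $\alpha$, $x_{\alpha,\tilde\alpha}$ is defined and equals $x_\alpha$.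
   Context: $(\cdot|\cdot)$ is a $W$-invariant scalar product with minimal squared root length $1$, maximal squared root length $r$; long roots have squared length $r$; $\Delta_{\mathrm{lg}},\Delta_{\mathrm{sh}}$ are long/short simple roots. $y\le x$ means $x-y$ is a non-negative combination of simple roots. For a long root $\gamma=\sum_{\delta\in\Delta}n_\delta\delta$, $\mathrm{ht}^\vee(\gamma)=\sum_{\delta\in\Delta_{\mathrm{lg}}}n_\delta+\frac1r\sum_{\delta\in\Delta_{\mathrm{sh}}}n_\delta$. Level: $L(\gamma)=\mathrm{ht}^\vee(\tilde\alpha)-\mathrm{ht}^\vee(\gamma)$ if $\gamma>0$, $L(\gamma)=\mathrm{ht}^\vee(\tilde\alpha)-\mathrm{ht}^\vee(\gamma)-1$ if $\gamma<0$. For long roots $\beta',\alpha'$ and $\gamma\in\Phi^+$, $\beta'\xrightarrow{\gamma}\alpha'$ means $\alpha'=s_\gamma(\beta')$ and $L(\alpha')=L(\beta')+1$. A simple path from $\beta$ to $\alpha$ is a sequence of long roots $\beta=\beta_0\xrightarrow{\gamma_1}\beta_1\cdots\xrightarrow{\gamma_k}\beta_k=\alpha$ with all $\gamma_i\in\Delta$. $\tilde I=\{\delta\in\Delta:(\tilde\alpha|\delta)=0\}$, $X_{\tilde I}=\{w\in W:w(\Phi^+_{\tilde I})\subset\Phi^+\}$ with $\Phi^+_{\tilde I}$ the positive roots in the span of $\tilde I$, and $x_\alpha$ is the unique element of $X_{\tilde I}$ with $x_\alpha(\tilde\alpha)=\alpha$. *)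

(* Coordinates: V is identified with R^n via the basis Delta = (delta_1..delta_n),
   i.e. vectors are column vectors 'cV[R]_n of coordinates w.r.t. Delta, and the
   i-th simple root is the i-th unit vector.  The scalar product (.|.) is given
   by its Gram matrix G on Delta. *)
From HB Require Import structures.
From mathcomp Require Import all_boot all_order all_algebra.
From Stdlib Require Import ClassicalEpsilon.
Set Implicit Arguments. Unset Strict Implicit. Unset Printing Implicit Defensive.
Import Order.TTheory GRing.Theory Num.Theory.
Local Open Scope ring_scope.

Section RootSystems.
Variables (R : realFieldType) (n : nat) (G : 'M[R]_n).

Definition form (u v : 'cV[R]_n) : R := (u^T *m G *m v) 0 0.
Definition sqlen (u : 'cV[R]_n) : R := form u u.
(* reflection s_a : v |-> v - 2 (a|v)/(a|a) a, acting on column vectors by x *m v *)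
Definition refl (a : 'cV[R]_n) : 'M[R]_n :=
  1%:M - (2 / sqlen a) *: (a *m a^T *m G).
Definition sroot (i : 'I_n) : 'cV[R]_n := delta_mx i 0.
Definition sref (i : 'I_n) : 'M[R]_n := refl (sroot i).
Definition wordmx (w : seq 'I_n) : 'M[R]_n := foldr (fun i m => sref i *m m) 1%:M w.

Definition has_word_of_length (x : 'M[R]_n) (k : nat) : bool :=
  [exists w : k.-tuple 'I_n, wordmx w == x].
Definition lengthW (x : 'M[R]_n) : nat :=
  match excluded_middle_informative (exists k, has_word_of_length x k) with
  | left h => ex_minn h
  | right _ => 0%N
  end.
Definition reduced_expr (x : 'M[R]_n) (w : seq 'I_n) : Prop :=
  wordmx w = x /\ size w = lengthW x.

Variable Phi : seq 'cV[R]_n.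

Definition is_irr_reduced_root_system_with_basis : Prop :=
  (0 < n)%N /\
  G^T = G /\ (forall v : 'cV[R]_n, v != 0 -> 0 < sqlen v) /\
  (0 : 'cV[R]_n) \notin Phi /\
  (forall a b, a \in Phi -> b \in Phi -> refl a *m b \in Phi) /\
  (forall a b, a \in Phi -> b \in Phi ->
      exists z : int, 2 * form a b / sqlen a = z%:~R) /\
  (forall a (c : R), a \in Phi -> c *: a \in Phi -> c = 1 \/ c = -1) /\
  (forall P : pred 'cV[R]_n,
      (forall a b, a \in Phi -> b \in Phi -> P a -> ~~ P b -> form a b = 0) ->
      (forall a, a \in Phi -> P a) \/ (forall a, a \in Phi -> ~~ P a)) /\
  (forall i, sroot i \in Phi) /\
  (forall a, a \in Phi ->
     (forall i, exists z : int, a i 0 = z%:~R) /\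
     ((forall i, 0 <= a i 0) \/ (forall i, a i 0 <= 0))).

Definition min_sqlen_one : Prop :=
  (forall a, a \in Phi -> 1 <= sqlen a) /\ exists2 a, a \in Phi & sqlen a = 1.

Definition rmax : R := \big[Num.max/0]_(a <- Phi) sqlen a.
Definition longroot (a : 'cV[R]_n) : bool := (a \in Phi) && (sqlen a == rmax).
Definition le_root (y x : 'cV[R]_n) : Prop := forall i, y i 0 <= x i 0.
Definition is_highest_root (ah : 'cV[R]_n) : Prop :=
  ah \in Phi /\ forall b, b \in Phi -> le_root b ah.
Definition posroot (a : 'cV[R]_n) : bool := (a \in Phi) && [forall i, 0 <= a i 0].

Definition htv (g : 'cV[R]_n) : R :=
  \sum_(i < n) (if longroot (sroot i) then g i 0 else g i 0 / rmax).

Variable ah : 'cV[R]_n.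

Definition level (g : 'cV[R]_n) : R :=
  htv ah - htv g - (if posroot g then 0 else 1).

Fixpoint spath (b : 'cV[R]_n) (gs : seq 'I_n) (a : 'cV[R]_n) : Prop :=
  match gs with
  | [::] => longroot b /\ b = a
  | g :: gs' => longroot b /\ level (sref g *m b) = level b + 1 /\
                spath (sref g *m b) gs' a
  end.

Definition inW (x : 'M[R]_n) : Prop :=
  exists s : seq 'cV[R]_n, (forall a, a \in s -> a \in Phi) /\
    x = foldr (fun a m => refl a *m m) 1%:M s.

Definition is_xab (a b : 'cV[R]_n) (x : 'M[R]_n) : Prop :=
  inW x /\ x *m b = a /\ (lengthW x)%:R = `|level a - level b|.

Definition Itilde (i : 'I_n) : bool := form ah (sroot i) == 0.
Definition posroot_I (a : 'cV[R]_n) : bool :=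
  posroot a && [forall i, ~~ Itilde i ==> (a i 0 == 0)].
Definition inX (x : 'M[R]_n) : Prop :=
  inW x /\ forall a, posroot_I a -> posroot (x *m a).

End RootSystems.

(* For a long root v, L (s_i v) - L v is the sign of (alpha_i | v): the
   Cartan integer 2 (alpha_i | v) / r of a long root v <> +-alpha_i lies in
   {-1, 0, 1}, and the coefficients of ht^vee are (alpha_i | alpha_i) / r since
   an irreducible root system has at most two root lengths, the short one being
   1 here.  So each simple reflection moves the level by at most one, which is
   (a), and a word of length |L a - L b| sending b to a is exactly a simple
   path.  Every long root a is joined to the highest root by a simple path,
   along which x^-1 inverts exactly the positive roots g with (a | g) < 0; since
   a Weyl group element is determined by its inversion set, whose size is its
   length, this gives uniqueness in (b) and identifies x_a in (e).  Part (c)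
   follows from the monotonicity of the level and subadditivity of length, and
   (d) from s_a = w s_j w^-1 where a = w alpha_j with l(w) = ht^vee a - 1. *)

From Pilot Require Import Defs.
From HB Require Import structures.
From mathcomp Require Import all_boot all_order all_algebra.
From mathcomp Require Import ring lra zify.
From Stdlib Require Import ClassicalEpsilon.
Import Pilot.Defs.
Set Implicit Arguments. Unset Strict Implicit. Unset Printing Implicit Defensive.
Import Order.TTheory GRing.Theory Num.Theory.
Local Open Scope ring_scope.

Lemma count_toggle (T : eqType) (S : seq T) (p q : pred T) x0 :
  uniq S -> x0 \in S -> q x0 -> ~~ p x0 ->
  (forall x, x \in S -> x != x0 -> p x = q x) ->
  count q S = (count p S).+1.
Proof.
elim: S => [|y S IH] //= /andP [hy hu] hx0 hq hp hall.
case: (eqVneq y x0) => [eyx|nyx].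
  subst y; rewrite hq (negbTE hp) /= add0n add1n; congr _.+1.
  apply/esym/eq_in_count => x hx; apply: hall; first by rewrite inE hx orbT.
  by apply: contraNneq hy => <-.
move: hx0; rewrite inE eq_sym (negbTE nyx) /= => hx0.
rewrite (hall y) ?inE ?eqxx // IH // => [|x hx hne]; first by rewrite addnS.
by apply: hall => //; rewrite inE hx orbT.
Qed.

Lemma mulmx_colP (R : pzSemiRingType) (m n : nat) (A B : 'M[R]_(m, n)) :
  (forall v : 'cV_n, A *m v = B *m v) -> A = B.
Proof.
move=> h; apply/matrixP => i j; have := h (delta_mx j 0); rewrite -!colE.
by move/(congr1 (fun M : 'cV[R]_m => M i 0)); rewrite !mxE.
Qed.

Definition is_int (R : numDomainType) (x : R) := exists z : int, x = z%:~R.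

Lemma is_int_ge1 (R : numDomainType) (x : R) : is_int x -> 0 < x -> 1 <= x.
Proof. by case=> z ->; rewrite ltr0z ler1z. Qed.

Lemma is_int_le_m1 (R : numDomainType) (x : R) : is_int x -> x < 0 -> x <= -1.
Proof.
case=> z ->; rewrite ltrz0 => h; have : (z <= -1)%R by lia.
by rewrite -(ler_int R) intrN.
Qed.

Lemma is_int_sum (R : numDomainType) (I : finType) (F : I -> R) :
  (forall i, is_int (F i)) -> is_int (\sum_i F i).
Proof.
move=> h; apply: (big_ind (@is_int R)); first by exists 0.
  by move=> x y [zx ->] [zy ->]; exists (zx + zy); rewrite intrD.
by move=> i _; apply: h.
Qed.

Lemma is_intM (R : numDomainType) (x y : R) : is_int x -> is_int y -> is_int (x * y).
Proof. by move=> [zx ->] [zy ->]; exists (zx * zy); rewrite intrM. Qed.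

Lemma is_intB (R : numDomainType) (x y : R) : is_int x -> is_int y -> is_int (x - y).
Proof. by move=> [zx ->] [zy ->]; exists (zx - zy); rewrite intrB. Qed.

Lemma is_int_in_0_4 (R : numDomainType) (x : R) : is_int x -> 0 < x < 4 -> x = 1 \/ x = 2 \/ x = 3.
Proof.
case=> z ->; rewrite ltr0z -[4]/(4%:~R) ltr_int => /andP [h1 h2].
have : (z = 1 \/ z = 2 \/ z = 3)%R by lia.
by case=> [|[|]] ->; [left | right; left | right; right].
Qed.

Lemma is_int_sqr_lt4 (R : numDomainType) (x : R) : is_int x -> x ^+ 2 < 4 -> x = -1 \/ x = 0 \/ x = 1.
Proof.
case=> z ->; rewrite -rmorphXn /= -[4]/(4%:~R) ltr_int => h.
have : (z = -1 \/ z = 0 \/ z = 1)%R by nia.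
by case=> [|[|]] ->; [left | right; left | right; right].
Qed.

Lemma int_measure_ind (R : realDomainType) (T : Type) (Q P : T -> Prop) (m : T -> R) :
  (forall x, Q x -> is_int (m x) /\ 0 <= m x) ->
  (forall x, Q x -> (forall y, Q y -> m y <= m x - 1 -> P y) -> P x) ->
  forall x, Q x -> P x.
Proof.
move=> hm hstep x hx; have [[z ez] hz] := hm x hx.
have : m x <= `|z|%N%:R by rewrite ez natr_absz ger0_norm // -(ler0z R) -ez.
elim: `|z|%N x hx {ez hz} => [|N IH] x hx hN; apply: hstep => // y hy hyx.
  by have := proj2 (hm y hy); move: hN hyx => /=; lra.
by apply: IH => //; move: hN hyx; rewrite -natr1; lra.
Qed.

Lemma bigmax_seq_attained (T : eqType) (R : realDomainType) (l : seq T) (F : T -> R) :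
  \big[Num.max/0]_(a <- l) F a = 0 \/
  exists2 a, a \in l & \big[Num.max/0]_(a <- l) F a = F a.
Proof.
elim: l => [|x l IH]; first by left; rewrite big_nil.
rewrite big_cons; case: (leP (\big[Num.max/0]_(a <- l) F a) (F x)) => h.
  by right; exists x; rewrite ?mem_head.
case: IH => [e|[a ha e]]; first by left.
by right; exists a; rewrite ?inE ?ha ?orbT.
Qed.

Lemma normr_sg_le1 (R : numDomainType) (x : R) : `|Num.sg x| <= 1.
Proof. by rewrite normr_sg lern1 leq_b1. Qed.

(** * Reflections and words *)

Section RootSystem.
Variables (R : realFieldType) (n : nat) (G : 'M[R]_n).

Local Notation fm := (form G).
Local Notation sq := (sqlen G).
Local Notation sr := (@sroot R n).
Local Notation s := (sref G).
Local Notation W := (wordmx G).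
Implicit Types (a b u v : 'cV[R]_n) (ws : seq 'I_n).

Lemma formE u v : fm u v = \sum_i u i 0 * (G *m v) i 0.
Proof. by rewrite /form -mulmxA !mxE; apply eq_bigr => i _; rewrite mxE. Qed.

Lemma formDl u v w : fm (u + v) w = fm u w + fm v w.
Proof. by rewrite !formE -big_split; apply eq_bigr => i _; rewrite mxE mulrDl. Qed.

Lemma formZl c u w : fm (c *: u) w = c * fm u w.
Proof. by rewrite !formE mulr_sumr; apply eq_bigr => i _; rewrite mxE mulrA. Qed.

Lemma formNl u w : fm (- u) w = - fm u w.
Proof. by rewrite -scaleN1r formZl mulN1r. Qed.

Lemma formBl u v w : fm (u - v) w = fm u w - fm v w.
Proof. by rewrite formDl formNl. Qed.

Lemma form0l w : fm 0 w = 0.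
Proof. by rewrite -[0](scale0r 0) formZl mul0r. Qed.

Lemma form_sroot i v : fm (sr i) v = (G *m v) i 0.
Proof.
rewrite formE (bigD1 i) //= big1 ?addr0; first by rewrite /sroot mxE !eqxx mul1r.
by move=> j /negbTE ji; rewrite /sroot mxE ji mul0r.
Qed.

Lemma form_coord u v : fm u v = \sum_i u i 0 * fm (sr i) v.
Proof. by rewrite formE; apply: eq_bigr => i _; rewrite form_sroot. Qed.

Lemma sroot_coord i j : sr i j 0 = (j == i)%:R.
Proof. by rewrite /sroot mxE andbT. Qed.

Lemma sroot_neq0 i : sr i != 0.
Proof. by apply/eqP => /matrixP /(_ i 0); rewrite sroot_coord mxE eqxx => /eqP; rewrite oner_eq0. Qed.

Lemma coord_sum (v : 'cV[R]_n) : v = \sum_j v j 0 *: sr j.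
Proof.
by rewrite {1}[v]matrix_sum_delta; apply: eq_bigr => j _; rewrite big_ord1.
Qed.

Lemma nonzero_coord (v : 'cV[R]_n) : v != 0 -> exists i, v i 0 != 0.
Proof.
move=> h; apply/existsP; apply: contraR h => /existsPn h; apply/eqP/matrixP => i j.
by rewrite (ord1 j) mxE; move: (h i); rewrite negbK => /eqP.
Qed.

Lemma reflE a v : refl G a *m v = v - (2 * fm a v / sq a) *: a.
Proof.
rewrite /refl mulmxBl mul1mx -scalemxAl -!mulmxA.
rewrite [a^T *m (G *m v)]mx11_scalar mul_mx_scalar scalerA.
by rewrite /form mulmxA mulrAC.
Qed.

Definition cartan a b := 2 * fm a b / sq a.

Lemma sref_coord i v j :
  (s i *m v) j 0 = v j 0 - (if j == i then cartan (sr i) v else 0).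
Proof. by rewrite /sref reflE !mxE andbT; case: eqP; rewrite ?mulr1 ?mulr0. Qed.

Lemma wordmx_cat ws1 ws2 : W (ws1 ++ ws2) = W ws1 *m W ws2.
Proof. by elim: ws1 => [|i ws IH] /=; rewrite ?mul1mx // IH mulmxA. Qed.

Lemma wordmx_rcons ws i : W (rcons ws i) = W ws *m s i.
Proof. by rewrite -cats1 wordmx_cat /= mulmx1. Qed.

Hypothesis G_sym : G^T = G.

Lemma form_sym u v : fm u v = fm v u.
Proof.
rewrite /form; have -> : (u^T *m G *m v) 0 0 = (u^T *m G *m v)^T 0 0 by rewrite [RHS]mxE.
by rewrite !trmx_mul trmxK G_sym mulmxA.
Qed.

Lemma formDr u v w : fm w (u + v) = fm w u + fm w v.
Proof. by rewrite ![fm w _]form_sym formDl. Qed.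
Lemma formZr c u w : fm w (c *: u) = c * fm w u.
Proof. by rewrite ![fm w _]form_sym formZl. Qed.
Lemma formNr u w : fm w (- u) = - fm w u.
Proof. by rewrite ![fm w _]form_sym formNl. Qed.
Lemma formBr u v w : fm w (u - v) = fm w u - fm w v.
Proof. by rewrite formDr formNr. Qed.
Lemma sqlenN v : sq (- v) = sq v.
Proof. by rewrite /sqlen formNl formNr opprK. Qed.

Lemma sqlenB_scale u v t : sq (v - t *: u) = sq v - 2 * t * fm u v + t ^+ 2 * sq u.
Proof. by rewrite /sqlen formBl !formBr !formZl !formZr [fm v u]form_sym; ring. Qed.

Lemma refl_self a : sq a != 0 -> refl G a *m a = - a.
Proof.
move=> h; rewrite reflE -/(sq a).
have -> : 2 * sq a / sq a = 2 by field.
by rewrite scaler_nat mulr2n opprD addrA subrr add0r.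
Qed.

Lemma refl_involutive a (v : 'cV[R]_n) : sq a != 0 -> refl G a *m (refl G a *m v) = v.
Proof.
move=> h; rewrite [refl G a *m v]reflE mulmxBr -scalemxAr refl_self //.
by rewrite reflE scalerN opprK subrK.
Qed.

Lemma reflN a : refl G (- a) = refl G a.
Proof.
apply: mulmx_colP => v; rewrite !reflE sqlenN formNl.
by rewrite scalerN -scaleNr mulrN mulNr opprK.
Qed.

Definition preserves_form (w : 'M[R]_n) := forall u v, fm (w *m u) (w *m v) = fm u v.

Lemma refl_preserves_form a : sq a != 0 -> preserves_form (refl G a).
Proof.
move=> h u v; rewrite !reflE !formBl !formBr !formZl !formZr -/(sq a) [fm u a]form_sym.
by field.
Qed.

Lemma refl_conj w a : preserves_form w -> refl G (w *m a) *m w = w *m refl G a.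
Proof.
move=> hw; apply: mulmx_colP => v; rewrite -!mulmxA !reflE /sqlen hw.
by rewrite mulmxBr -scalemxAr hw.
Qed.

Hypothesis G_pos : forall v : 'cV[R]_n, v != 0 -> 0 < sq v.

Lemma sqlen_ge0 v : 0 <= sq v.
Proof. by case: (eqVneq v 0) => [->|/G_pos/ltW //]; rewrite /sqlen form0l. Qed.

Lemma sqlen_eq0 v : (sq v == 0) = (v == 0).
Proof.
by case: (eqVneq v 0) => [->|/G_pos/gt_eqF //]; rewrite /sqlen form0l eqxx.
Qed.

Lemma cauchy_schwarz u v : fm u v ^+ 2 <= sq u * sq v.
Proof.
case: (eqVneq u 0) => [->|hu]; first by rewrite form0l /sqlen form0l expr0n mul0r.
have hp := G_pos hu; have := sqlen_ge0 (v - (fm u v / sq u) *: u).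
rewrite sqlenB_scale -(pmulr_rge0 _ hp).
have -> : sq u * (sq v - 2 * (fm u v / sq u) * fm u v + (fm u v / sq u) ^+ 2 * sq u)
   = sq u * sq v - fm u v ^+ 2 by field; rewrite gt_eqF.
by rewrite subr_ge0.
Qed.

Lemma cauchy_schwarz_eq u v :
  u != 0 -> fm u v ^+ 2 = sq u * sq v -> v = (fm u v / sq u) *: u.
Proof.
move=> hu he; have hp := G_pos hu.
apply/eqP; rewrite -subr_eq0 -sqlen_eq0 sqlenB_scale.
have -> : sq v - 2 * (fm u v / sq u) * fm u v + (fm u v / sq u) ^+ 2 * sq u
   = (sq u * sq v - fm u v ^+ 2) / sq u by field; rewrite gt_eqF.
by rewrite he subrr mul0r.
Qed.

Lemma sqlen_sroot_neq0 i : sq (sr i) != 0.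
Proof. by rewrite sqlen_eq0 sroot_neq0. Qed.

Lemma sref_involutive i (v : 'cV[R]_n) : s i *m (s i *m v) = v.
Proof. exact/refl_involutive/sqlen_sroot_neq0. Qed.

Lemma sref_sroot i : s i *m sr i = - sr i.
Proof. exact/refl_self/sqlen_sroot_neq0. Qed.

Lemma sref_preserves_form i : preserves_form (s i).
Proof. exact/refl_preserves_form/sqlen_sroot_neq0. Qed.

Lemma word_preserves_form ws : preserves_form (W ws).
Proof.
elim: ws => [|i ws IH] u v /=; first by rewrite !mul1mx.
by rewrite -!mulmxA sref_preserves_form.
Qed.

Lemma sqlen_word ws v : sq (W ws *m v) = sq v.
Proof. exact: word_preserves_form. Qed.

Lemma form_sref_swap i u v : fm (s i *m u) v = fm u (s i *m v).
Proof. by rewrite -{1}(sref_involutive i v) sref_preserves_form. Qed.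

Lemma word_revK ws v : W (rev ws) *m (W ws *m v) = v.
Proof.
elim: ws v => [|i ws IH] v /=; first by rewrite !mul1mx.
by rewrite rev_cons wordmx_rcons -!mulmxA sref_involutive IH.
Qed.

Lemma word_Krev ws v : W ws *m (W (rev ws) *m v) = v.
Proof. by rewrite -{1}(revK ws) word_revK. Qed.

Lemma form_word_swap ws u v : fm (W ws *m u) v = fm u (W (rev ws) *m v).
Proof. by rewrite -{1}(word_Krev ws v) word_preserves_form. Qed.

Lemma wordmx_rev_eq ws1 ws2 : W ws1 = W ws2 -> W (rev ws1) = W (rev ws2).
Proof. by move=> h; apply: mulmx_colP => v; rewrite -{1}[v](word_Krev ws2) -h word_revK. Qed.

Lemma wordmx_rcons_eq ws1 ws2 i : W (rcons ws1 i) = W (rcons ws2 i) -> W ws1 = W ws2.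
Proof.
move=> e; apply: mulmx_colP => v; move/(congr1 (fun M => M *m (s i *m v))): e.
by rewrite !wordmx_rcons -!mulmxA sref_involutive.
Qed.

Lemma reflE_word ws j : refl G (W ws *m sr j) = W (ws ++ j :: rev ws).
Proof.
rewrite wordmx_cat /=; apply: mulmx_colP => v.
rewrite -[v in LHS](word_Krev ws v) mulmxA refl_conj; last exact: word_preserves_form.
by rewrite /sref !mulmxA.
Qed.

Lemma has_word_of_lengthP x k :
  reflect (exists2 ws, size ws = k & W ws = x) (has_word_of_length G x k).
Proof.
apply: (iffP existsP) => [[w /eqP hw]|[ws hs hw]].
  by exists (tval w); rewrite ?size_tuple.
have hs' : size ws == k by rewrite hs.
by exists (Tuple hs'); rewrite /= hw.
Qed.

Lemma lengthW_le ws : (lengthW G (W ws) <= size ws)%N.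
Proof.
rewrite /lengthW; case: excluded_middle_informative => [h|[]].
  by case: ex_minnP => m _; apply; apply/has_word_of_lengthP; exists ws.
by exists (size ws); apply/has_word_of_lengthP; exists ws.
Qed.

Lemma lengthW_spec ws : exists2 ws', W ws' = W ws & size ws' = lengthW G (W ws).
Proof.
rewrite /lengthW; case: excluded_middle_informative => [h|[]].
  by case: ex_minnP => m /has_word_of_lengthP [ws' h1 h2] _; exists ws'.
by exists (size ws); apply/has_word_of_lengthP; exists ws.
Qed.

Lemma lengthW_rev ws : lengthW G (W (rev ws)) = lengthW G (W ws).
Proof.
have le ws0 : (lengthW G (W (rev ws0)) <= lengthW G (W ws0))%N.
  have [ws' h1 <-] := lengthW_spec ws0.
  by rewrite -(wordmx_rev_eq h1) -(size_rev ws') lengthW_le.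
by apply/eqP; rewrite eqn_leq le /=; have := le (rev ws); rewrite revK.
Qed.

Lemma lengthW_mul ws1 ws2 :
  (lengthW G (W ws1 *m W ws2) <= lengthW G (W ws1) + lengthW G (W ws2))%N.
Proof.
have [w1 <- <-] := lengthW_spec ws1; have [w2 <- <-] := lengthW_spec ws2.
by rewrite -wordmx_cat -size_cat lengthW_le.
Qed.

Lemma lengthW_eq0 ws : lengthW G (W ws) = 0%N -> W ws = 1%:M.
Proof. by move=> h; have [ws' e] := lengthW_spec ws; rewrite h -e => /size0nil ->. Qed.

(** * Roots and inversion sets *)

Variable Phi : seq 'cV[R]_n.
Hypothesis HRS : is_irr_reduced_root_system_with_basis G Phi.

Local Notation pos := (posroot Phi).
Definition negroot v := (v \in Phi) && [forall i, v i 0 <= 0].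
Local Notation neg := negroot.

Lemma root_neq0 a : a \in Phi -> a != 0.
Proof. by case: HRS => _ [_ [_ [h0 _]]]; apply: contraTneq => ->. Qed.

Lemma refl_root a b : a \in Phi -> b \in Phi -> refl G a *m b \in Phi.
Proof. by case: HRS => _ [_ [_ [_ [h _]]]]; apply: h. Qed.

Lemma cartan_root_int a b : a \in Phi -> b \in Phi -> is_int (cartan a b).
Proof. by case: HRS => _ [_ [_ [_ [_ [h _]]]]]; apply: h. Qed.

Lemma root_scale a c : a \in Phi -> c *: a \in Phi -> c = 1 \/ c = -1.
Proof. by case: HRS => _ [_ [_ [_ [_ [_ [h _]]]]]]; apply: h. Qed.

Lemma roots_irreducible (P : pred 'cV[R]_n) :
  (forall a b, a \in Phi -> b \in Phi -> P a -> ~~ P b -> fm a b = 0) ->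
  (forall a, a \in Phi -> P a) \/ (forall a, a \in Phi -> ~~ P a).
Proof. by case: HRS => _ [_ [_ [_ [_ [_ [_ [h _]]]]]]]; apply: h. Qed.

Lemma sroot_root i : sr i \in Phi.
Proof. by case: HRS => _ [_ [_ [_ [_ [_ [_ [_ [h _]]]]]]]]; apply: h. Qed.

Lemma root_coord_int a i : a \in Phi -> is_int (a i 0).
Proof. by case: HRS => _ [_ [_ [_ [_ [_ [_ [_ [_ h]]]]]]]] /h [h1 _]. Qed.

Lemma root_sign a : a \in Phi -> (forall i, 0 <= a i 0) \/ (forall i, a i 0 <= 0).
Proof. by case: HRS => _ [_ [_ [_ [_ [_ [_ [_ [_ h]]]]]]]] /h [_ h2]. Qed.

Lemma sqlen_root_gt0 a : a \in Phi -> 0 < sq a.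
Proof. by move/root_neq0/G_pos. Qed.

Lemma sqlen_root_neq0 a : a \in Phi -> sq a != 0.
Proof. by move/sqlen_root_gt0/gt_eqF ->. Qed.

Lemma rootN a : a \in Phi -> - a \in Phi.
Proof. by move=> h; rewrite -(refl_self (sqlen_root_neq0 h)) refl_root. Qed.

Lemma sref_root i a : a \in Phi -> s i *m a \in Phi.
Proof. exact/refl_root/sroot_root. Qed.

Lemma word_root ws a : a \in Phi -> W ws *m a \in Phi.
Proof. by elim: ws => [|i ws IH] /= h; rewrite ?mul1mx // -mulmxA sref_root ?IH. Qed.

Lemma posrootP a : reflect (a \in Phi /\ forall i, 0 <= a i 0) (pos a).
Proof. by apply: (iffP andP) => -[h1 h2]; split => //; apply/forallP. Qed.

Lemma negrootP a : reflect (a \in Phi /\ forall i, a i 0 <= 0) (neg a).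
Proof. by apply: (iffP andP) => -[h1 h2]; split => //; apply/forallP. Qed.

Lemma posroot_root a : pos a -> a \in Phi.
Proof. by case/posrootP. Qed.

Lemma posroot_neg a : pos a -> ~~ neg a.
Proof.
move=> /posrootP [h1 h2]; apply/negP => /negrootP [_ h3].
have [i hi] := nonzero_coord (root_neq0 h1).
by move: hi; rewrite eq_le h3 h2.
Qed.

Lemma negrootE a : a \in Phi -> neg a = ~~ pos a.
Proof.
move=> h; case: (root_sign h) => hc.
  have hp : pos a by apply/posrootP.
  by rewrite hp (negbTE (posroot_neg hp)).
have hn : neg a by apply/negrootP.
by rewrite hn; apply/esym/negP => /posroot_neg; rewrite hn.
Qed.

Lemma root_posVneg a : a \in Phi -> pos a \/ neg a.
Proof. by move=> h; rewrite negrootE //; case: (pos a); [left | right]. Qed.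

Lemma posrootN a : pos (- a) = neg a.
Proof.
apply/posrootP/negrootP => -[h1 h2]; split.
- by rewrite -[a]opprK rootN.
- by move=> i; move: (h2 i); rewrite mxE oppr_ge0.
- by rewrite rootN.
- by move=> i; rewrite mxE oppr_ge0.
Qed.

Lemma negrootN a : neg (- a) = pos a.
Proof. by rewrite -posrootN opprK. Qed.

Lemma sroot_pos i : pos (sr i).
Proof. by apply/posrootP; split=> [|j]; rewrite ?sroot_root // sroot_coord ler0n. Qed.

(* A positive root [a != sr i] is not a multiple of [sr i], so it has a
   positive coordinate outside [i], which [s i] does not change. *)
Lemma sref_pos i a : pos a -> a != sr i -> pos (s i *m a).
Proof.
move=> ha hne; have /posrootP [hP hc] := ha.
have /existsP [j /andP [hji hj]] : [exists j, (j != i) && (a j 0 != 0)].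
  apply: contraR hne => /existsPn hall.
  have ha_eq : a = a i 0 *: sr i.
    apply/matrixP => j k; rewrite (ord1 k) mxE sroot_coord.
    case: (eqVneq j i) => [->|hji]; first by rewrite mulr1.
    by move: (hall j); rewrite hji negbK => /eqP ->; rewrite mulr0.
  have := @root_scale (sr i) (a i 0) (sroot_root i); rewrite -ha_eq => /(_ hP) [] h1.
    by rewrite ha_eq h1 scale1r.
  by move: (hc i); rewrite h1 oppr_ge0 ler10.
case: (root_posVneg (sref_root i hP)) => // /negrootP [_ hneg].
move: (hneg j) (hc j); rewrite sref_coord (negbTE hji) subr0 => h1 h2.
by move: hj; rewrite eq_le h1 h2.
Qed.

Lemma sref_neg i a : neg a -> a != - sr i -> neg (s i *m a).
Proof.
move=> ha hne; rewrite -posrootN -mulmxN; apply: sref_pos; first by rewrite posrootN.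
by apply: contra hne => /eqP <-; rewrite opprK.
Qed.

Lemma sref_sign i a : a \in Phi -> a != sr i -> a != - sr i -> pos (s i *m a) = pos a.
Proof.
move=> ha h1 h2; case: (root_posVneg ha) => hs; first by rewrite hs sref_pos.
have -> : pos a = false by apply/negbTE; rewrite -negrootE.
by apply/negbTE; rewrite -negrootE ?sref_root ?sref_neg.
Qed.

Lemma word_pos_of_sroot_pos ws :
  (forall i, pos (W ws *m sr i)) -> forall g, pos g -> pos (W ws *m g).
Proof.
move=> hs g /posrootP [hg hc]; have hr := word_root ws hg.
case: (root_posVneg hr) => // /negrootP [_ hn].
suff : W ws *m g = 0 by move/eqP; rewrite (negbTE (root_neq0 hr)).
apply/matrixP => k l; rewrite (ord1 l) [RHS]mxE; apply/eqP; rewrite eq_le hn /=.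
rewrite [g]coord_sum mulmx_sumr summxE; apply: sumr_ge0 => j _.
by rewrite -scalemxAr mxE mulr_ge0 //; case/posrootP: (hs j) => _ ->.
Qed.

Definition inversion (x : 'M[R]_n) g := pos g && neg (x *m g).
Definition ninversions (x : 'M[R]_n) := count (inversion x) (undup Phi).

Lemma ninversions_eq0 x : (forall g, pos g -> ~~ neg (x *m g)) -> ninversions x = 0%N.
Proof.
move=> h; apply/eqP; rewrite -leqn0 leqNgt -has_count; apply/hasPn => g _.
by rewrite /inversion; apply/nandP; case: (boolP (pos g)) => [/h|]; [right | left].
Qed.

Lemma ninversions1 : ninversions 1%:M = 0%N.
Proof. by apply: ninversions_eq0 => g /posroot_neg; rewrite mul1mx. Qed.

(* The inversion sets of [s i *m W ws] and [W ws] differ exactly at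
   [W (rev ws) *m sr i]. *)
Lemma ninversions_cons_pos ws i : pos (W (rev ws) *m sr i) ->
  ninversions (W (i :: ws)) = (ninversions (W ws)).+1.
Proof.
move=> h0; set g0 := W (rev ws) *m sr i.
rewrite /ninversions (@count_toggle _ _ (inversion (W ws)) _ g0) ?undup_uniq //.
- by rewrite mem_undup posroot_root.
- by rewrite /inversion h0 /g0 /= -mulmxA word_Krev sref_sroot negrootN sroot_pos.
- by rewrite /inversion h0 /g0 word_Krev (negbTE (posroot_neg (sroot_pos i))).
move=> g; rewrite mem_undup => hg hne; rewrite /inversion /=.
case hpg: (pos g) => //=; have hwg := word_root ws hg.
have ne1 : W ws *m g != sr i by apply: contra hne => /eqP h; rewrite /g0 -h word_revK.
have ne2 : W ws *m g != - sr i.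
  apply: contraL h0 => /eqP h; rewrite /g0 -[sr i]opprK -h mulmxN word_revK.
  by rewrite posrootN negrootE // hpg.
by rewrite -mulmxA !negrootE ?sref_root // sref_sign.
Qed.

Lemma ninversions_cons_neg ws i : neg (W (rev ws) *m sr i) ->
  ninversions (W ws) = (ninversions (W (i :: ws))).+1.
Proof.
move=> h0; have -> : W ws = W (i :: i :: ws).
  by apply: mulmx_colP => v; rewrite /= -!mulmxA sref_involutive.
apply: ninversions_cons_pos.
by rewrite rev_cons wordmx_rcons -mulmxA sref_sroot mulmxN posrootN.
Qed.

Lemma ninversions_le ws : (ninversions (W ws) <= size ws)%N.
Proof.
elim: ws => [|i ws IH] /=; first by rewrite ninversions1.
case: (root_posVneg (word_root (rev ws) (sroot_root i))) => h.
  by rewrite ninversions_cons_pos.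
by have := ninversions_cons_neg h; rewrite /= => e; lia.
Qed.

Lemma exchange ws mu : pos mu -> neg (W (rev ws) *m mu) ->
  exists2 ws', (size ws').+1 = size ws & refl G mu *m W ws = W ws'.
Proof.
elim: ws mu => [|j ws IH] mu hmu /=.
  by rewrite mul1mx => hn; move: (posroot_neg hmu); rewrite hn.
rewrite rev_cons wordmx_rcons -mulmxA => hneg.
case: (eqVneq mu (sr j)) => [->|hne].
  by exists ws => //; rewrite mulmxA -[refl G _]/(s j); apply: mulmx_colP => v; rewrite -!mulmxA sref_involutive.
have [ws' hs he] := IH _ (sref_pos hmu hne) hneg.
exists (j :: ws'); first by rewrite /= hs.
have hc : refl G mu *m s j = s j *m refl G (s j *m mu).
  by rewrite -{1}[mu](sref_involutive j) refl_conj //; apply: sref_preserves_form.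
by rewrite /= mulmxA hc -mulmxA he.
Qed.

Lemma word_ninversions ws :
  exists2 ws', W ws' = W ws & size ws' = ninversions (W ws).
Proof.
elim: ws => [|i ws [ws' he hs]].
  by exists [::]; rewrite ?ninversions1.
case: (root_posVneg (word_root (rev ws') (sroot_root i))) => h.
  exists (i :: ws'); first by rewrite /= he.
  by move: (ninversions_cons_pos h); rewrite /= he hs => ->.
have [ws'' hs' he'] := exchange (sroot_pos i) h.
exists ws''; first by rewrite -he' /= he.
by move: (ninversions_cons_neg h) hs'; rewrite /= he hs => ->; lia.
Qed.

Lemma lengthW_ninversions ws : lengthW G (W ws) = ninversions (W ws).
Proof.
apply/eqP; rewrite eqn_leq; apply/andP; split.
  by have [ws' <- <-] := word_ninversions ws; apply: lengthW_le.
by have [ws' <- <-] := lengthW_spec ws; rewrite ninversions_le.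
Qed.

Lemma inversions_determine ws1 ws2 :
  (forall g, pos g -> neg (W ws1 *m g) = neg (W ws2 *m g)) -> W ws1 = W ws2.
Proof.
have [k] := ubnP (ninversions (W ws1)); elim: k ws1 ws2 => // k IH ws1 ws2 hk hsame.
have id_of_pos ws : (forall i, pos (W ws *m sr i)) -> W ws = 1%:M.
  move=> hpos; apply: lengthW_eq0; rewrite lengthW_ninversions ninversions_eq0 //.
  by move=> g /(word_pos_of_sroot_pos hpos)/posroot_neg.
have hsr ws i : neg (W ws *m sr i) = ~~ pos (W ws *m sr i).
  exact/negrootE/word_root/sroot_root.
case: (boolP [forall i, pos (W ws1 *m sr i)]) => [/forallP hall|/forallPn [i hi]].
  rewrite (id_of_pos ws1) // (id_of_pos ws2) // => i.
  move: (hsame _ (sroot_pos i)).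
  by rewrite !hsr (hall i) => /esym/negbFE.
have hn1 : neg (W ws1 *m sr i) by rewrite hsr.
have hn2 : neg (W ws2 *m sr i) by rewrite -hsame ?sroot_pos.
apply: (@wordmx_rcons_eq _ _ i); apply: IH.
  rewrite -ltnS (leq_trans _ hk) // ltnS -lengthW_ninversions -lengthW_rev rev_rcons.
  rewrite lengthW_ninversions -(ninversions_cons_neg (ws := rev ws1)) ?revK //.
  by rewrite -lengthW_ninversions lengthW_rev lengthW_ninversions.
move=> g hg; rewrite !wordmx_rcons -!mulmxA.
case: (eqVneq g (sr i)) => [->|hne]; last by rewrite hsame // sref_pos.
by rewrite sref_sroot !mulmxN !negrootN; move: hn1 hn2; rewrite !hsr => /negbTE-> /negbTE->.
Qed.

(** * Root lengths, heights and reflection words *)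

Lemma cauchy_schwarz_roots a b : a \in Phi -> b \in Phi -> b != a -> b != - a ->
  fm a b ^+ 2 < sq a * sq b.
Proof.
move=> ha hb h1 h2; rewrite lt_neqAle cauchy_schwarz andbT; apply/eqP => e.
have e' := cauchy_schwarz_eq (root_neq0 ha) e.
have := @root_scale a (fm a b / sq a) ha; rewrite -e' => /(_ hb) [] hc; move: e'; rewrite hc.
  by rewrite scale1r => /eqP; rewrite (negbTE h1).
by rewrite scaleN1r => /eqP; rewrite (negbTE h2).
Qed.

Lemma cartan_lt0 a v : a \in Phi -> (cartan a v < 0) = (fm a v < 0).
Proof. by move=> ha; rewrite /cartan pmulr_llt0 ?invr_gt0 ?sqlen_root_gt0 // pmulr_rlt0. Qed.

Lemma sgr_cartan a v : a \in Phi -> Num.sg (cartan a v) = Num.sg (fm a v).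
Proof.
move=> ha; rewrite /cartan !sgrM [Num.sg 2]gtr0_sg // [Num.sg _^-1]gtr0_sg.
  by rewrite mul1r mulr1.
by rewrite invr_gt0 sqlen_root_gt0.
Qed.

(* [(cartan b a * sq b) ^+ 2 = 4 (a | b) ^+ 2 < 4 sq a * sq b <= 4 sq b ^+ 2]. *)
Lemma cartan_longer a b : a \in Phi -> b \in Phi -> b != a -> b != - a ->
  sq a <= sq b -> cartan b a = -1 \/ cartan b a = 0 \/ cartan b a = 1.
Proof.
move=> ha hb h1 h2 hab; apply: is_int_sqr_lt4; first exact: cartan_root_int.
have hB := sqlen_root_gt0 hb; have hA := sqlen_root_gt0 ha.
have hcs := cauchy_schwarz_roots ha hb h1 h2.
have hAB : sq a * sq b <= sq b ^+ 2 by rewrite expr2 ler_pM2r.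
rewrite /cartan form_sym expr_div_n ltr_pdivrMr ?exprn_gt0 //.
have -> : (2 * fm a b) ^+ 2 = 4 * fm a b ^+ 2 by ring.
by rewrite ltr_pM2l ?ltr0n //; apply: lt_le_trans hcs hAB.
Qed.

Lemma cartan_sqlen a b : a \in Phi -> cartan a b * sq a = 2 * fm a b.
Proof. by move=> ha; rewrite /cartan mulfVK ?sqlen_root_neq0. Qed.

Lemma cartan_mul a b : a \in Phi -> b \in Phi ->
  cartan a b * cartan b a * (sq a * sq b) = 4 * fm a b ^+ 2.
Proof.
move=> ha hb; have hA := sqlen_root_neq0 ha; have hB := sqlen_root_neq0 hb.
by rewrite /cartan [fm b a]form_sym; field; rewrite hA hB.
Qed.

Lemma sqlen_ratio a b : a \in Phi -> b \in Phi -> fm a b != 0 -> sq a <= sq b ->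
  sq b = sq a \/ sq b = 2 * sq a \/ sq b = 3 * sq a.
Proof.
move=> ha hb hf hab.
case: (eqVneq b a) => [->|h1]; first by left.
case: (eqVneq b (- a)) => [->|h2]; first by left; rewrite sqlenN.
have hAB : 0 < sq a * sq b by rewrite mulr_gt0 ?sqlen_root_gt0.
have hq2 : cartan b a ^+ 2 = 1.
  have hq0 : cartan b a != 0.
    by rewrite /cartan form_sym !mulf_neq0 ?invr_eq0 ?pnatr_eq0 ?sqlen_root_neq0.
  case: (cartan_longer ha hb h1 h2 hab) => [|[|]] hc; rewrite hc ?sqrrN ?expr1n //.
  by move: hq0; rewrite hc eqxx.
have <- : cartan a b * cartan b a * sq a = sq b.
  rewrite mulrAC cartan_sqlen // form_sym -cartan_sqlen //.
  by rewrite mulrC mulrA -expr2 hq2 mul1r.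
have hm : 0 < cartan a b * cartan b a < 4.
  have e := cartan_mul ha hb; apply/andP; split.
    by rewrite -(pmulr_lgt0 _ hAB) e mulr_gt0 ?ltr0n // lt_def sqrf_eq0 hf sqr_ge0.
  by rewrite -(ltr_pM2r hAB) e ltr_pM2l ?ltr0n ?cauchy_schwarz_roots.
have := is_int_in_0_4 (is_intM (cartan_root_int ha hb) (cartan_root_int hb ha)) hm.
by case=> [|[|]] ->; rewrite ?mul1r; [left | right; left | right; right].
Qed.

Local Notation rm := (rmax G Phi).
Local Notation long := (longroot G Phi).

Lemma le_rmax a : a \in Phi -> sq a <= rm.
Proof. by move=> h; apply: (le_bigmax_seq _ _ xpredT). Qed.

Lemma rmax_attained : exists2 a, a \in Phi & sq a = rm.
Proof.
have n_gt0 : (0 < n)%N by case: HRS.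
have hroot := sroot_root (Ordinal n_gt0).
case: (bigmax_seq_attained Phi sq) => [e|[a ha e]]; last by exists a.
by have := le_rmax hroot; rewrite /rmax e leNgt sqlen_root_gt0.
Qed.

Lemma rmax_gt0 : 0 < rm.
Proof. by case: rmax_attained => a ha <-; apply: sqlen_root_gt0. Qed.

Lemma longrootP a : reflect (a \in Phi /\ sq a = rm) (long a).
Proof. by apply: (iffP andP) => -[h1 /eqP h2]. Qed.

Lemma long_word ws v : long v -> long (W ws *m v).
Proof. by move=> /longrootP [h1 h2]; apply/longrootP; rewrite word_root ?sqlen_word. Qed.

Lemma long_sref i v : long v -> long (s i *m v).
Proof. by move=> /(long_word [:: i]); rewrite /= mulmx1. Qed.

Lemma longN v : long v -> long (- v).
Proof. by move=> /longrootP [h1 h2]; apply/longrootP; rewrite rootN ?sqlenN. Qed.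

Definition height v := \sum_i v i 0.

Lemma height_root_int a : a \in Phi -> is_int (height a).
Proof. by move=> h; apply: is_int_sum => i; apply: root_coord_int. Qed.

Lemma height_posroot_gt0 a : pos a -> 0 < height a.
Proof.
case/posrootP => ha hc; have [i hi] := nonzero_coord (root_neq0 ha).
rewrite /height (bigD1 i) //= ltr_pwDl ?sumr_ge0 //.
by rewrite lt_def hi hc.
Qed.

Lemma height_sref i v : height (s i *m v) = height v - cartan (sr i) v.
Proof.
rewrite /height (eq_bigr _ (fun j _ => sref_coord i v j)) sumrB; congr (_ - _).
by rewrite (bigD1 i) //= eqxx big1 ?addr0 // => j /negbTE ->.
Qed.

Lemma posroot_form_sroot_gt0 a : pos a -> exists i, 0 < fm (sr i) a.
Proof.
case/posrootP => ha hc; apply/existsP; apply: contraT => /existsPn h.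
suff : sq a <= 0 by rewrite leNgt sqlen_root_gt0.
rewrite /sqlen form_coord -oppr_ge0 -sumrN; apply: sumr_ge0 => i _.
by rewrite oppr_ge0 mulr_ge0_le0 // leNgt (h i).
Qed.

Lemma cartan_sroot_ge1 i a : a \in Phi -> 0 < fm (sr i) a -> 1 <= cartan (sr i) a.
Proof.
move=> ha hf; apply: is_int_ge1; first exact/cartan_root_int/ha/sroot_root.
by rewrite /cartan !mulr_gt0 ?invr_gt0 ?sqlen_root_gt0 ?sroot_root.
Qed.

Lemma posroot_ind (P : 'cV[R]_n -> Prop) :
  (forall j, P (sr j)) ->
  (forall a i, pos a -> a != sr i -> 0 < fm (sr i) a -> P (s i *m a) -> P a) ->
  forall a, pos a -> P a.
Proof.
move=> hsimple hstep; apply: (int_measure_ind (m := height)).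
  by move=> a ha; split; [exact/height_root_int/posroot_root | exact/ltW/height_posroot_gt0].
move=> a ha IH; case: (boolP [exists j, a == sr j]) => [/existsP [j /eqP -> //]|hnj].
have [i hi] := posroot_form_sroot_gt0 ha.
have hne : a != sr i by apply: contra hnj => /eqP ->; apply/existsP; exists i.
apply: (hstep a i) => //; apply: IH; first exact: sref_pos.
by rewrite height_sref lerD2l lerN2 cartan_sroot_ge1 ?posroot_root.
Qed.

Lemma posroot_word a : pos a -> exists ws j, a = W ws *m sr j.
Proof.
move: a; apply: posroot_ind => [j|a i _ _ _ [ws [j e]]]; first by exists [::], j; rewrite mul1mx.
by exists (i :: ws), j; rewrite /= -mulmxA -e sref_involutive.
Qed.

Lemma refl_word a : a \in Phi -> exists ws, refl G a = W ws.
Proof.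
move=> ha; wlog hp : a ha / pos a => [hwlog|].
  case: (root_posVneg ha) => [|hn]; first exact: hwlog.
  by rewrite -reflN; apply: hwlog; rewrite ?rootN ?posrootN.
by have [ws [j ->]] := posroot_word hp; exists (ws ++ j :: rev ws); rewrite reflE_word.
Qed.

Lemma word_inW ws : inW G Phi (W ws).
Proof.
exists (map sr ws); split; first by move=> a /mapP [i _ ->]; apply: sroot_root.
by elim: ws => [|i ws IH] //=; rewrite IH.
Qed.

Lemma inW_word x : inW G Phi x -> exists ws, x = W ws.
Proof.
case=> l [hl ->]; elim: l hl => [|a l IH] hl /=; first by exists [::].
have [ws1 ->] := refl_word (hl a (mem_head _ _)).
have [ws2 ->] := IH (fun b hb => hl b (@mem_behead _ (a :: l) _ hb)).
by exists (ws1 ++ ws2); rewrite wordmx_cat.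
Qed.

(* By irreducibility, the roots that are not orthogonal to the whole W-orbit
   of [a] exhaust [Phi]: if [x] is not orthogonal to [o] in the orbit, then
   [x] is a combination of [o] and [s_x o], both in the orbit. *)
Lemma orbit_not_orthogonal a b : a \in Phi -> b \in Phi ->
  exists ws, fm (W ws *m a) b != 0.
Proof.
move=> ha hb; pose Q v := exists ws, fm (W ws *m a) v != 0.
pose P v : bool := if excluded_middle_informative (Q v) then true else false.
have PQ v : P v <-> Q v by rewrite /P; case: excluded_middle_informative.
suff [hall|hnone] : (forall x, x \in Phi -> P x) \/ (forall x, x \in Phi -> ~~ P x).
- exact/PQ/hall.
- suff /negP[] : ~~ P a by apply/PQ; exists [::]; rewrite mul1mx -/(sq a) sqlen_root_neq0.
  exact: hnone.
apply: roots_irreducible => x y hx hy /PQ [ws hws] hy'.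
have hy0 ws' : fm (W ws' *m a) y = 0.
  by apply/eqP; apply: contraNT hy' => h; apply/PQ; exists ws'.
set o := W ws *m a in hws.
have [wx ex] := refl_word hx.
have ho : fm (refl G x *m o) y = 0 by rewrite ex /o mulmxA -wordmx_cat hy0.
move: ho; rewrite reflE formBl formZl (hy0 ws) sub0r => /eqP.
rewrite oppr_eq0 !mulf_eq0 invr_eq0 pnatr_eq0 (negbTE (sqlen_root_neq0 hx)) form_sym.
by rewrite (negbTE hws) /= => /eqP.
Qed.

Hypothesis Hmin : min_sqlen_one G Phi.

Lemma sqlen_root_ge1 a : a \in Phi -> 1 <= sq a.
Proof. by case: Hmin => h _ /h. Qed.

Lemma rmax_ge1 : 1 <= rm.
Proof. by case: Hmin => _ [a ha <-]; apply: le_rmax. Qed.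

Lemma sqlen_root_ratio a b : a \in Phi -> b \in Phi -> sq a <= sq b ->
  sq b = sq a \/ sq b = 2 * sq a \/ sq b = 3 * sq a.
Proof.
move=> ha hb hab; have [ws hws] := orbit_not_orthogonal ha hb.
by rewrite -(sqlen_word ws a); apply: sqlen_ratio; rewrite ?word_root ?sqlen_word.
Qed.

(* With [1 <= d < r] and all length ratios in {1, 2, 3}, [d > 1] would force
   [r >= 2 d >= 4]. *)
Lemma sqlen_short_sroot i : ~~ long (sr i) -> sq (sr i) = 1.
Proof.
move=> hnl; have hi := sroot_root i.
have hlt : sq (sr i) < rm.
  by rewrite lt_neqAle le_rmax // andbT; apply: contra hnl => /eqP e; apply/longrootP.
case: Hmin => _ [e he he1]; have [c hc hcr] := rmax_attained.
have := sqlen_root_ratio he hi; have := sqlen_root_ratio hi hc.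
have := sqlen_root_ratio he hc; rewrite he1 hcr.
move: (sqlen_root_ge1 hi) rmax_ge1 hlt; set d := sq (sr i); set r := rm => h1 h2 h3.
move=> /(_ h2) r3 /(_ (ltW h3)) r2 /(_ h1) r1.
by case: r1 => [|[|]] e1; case: r2 => [|[|]] e2; case: r3 => [|[|]] e3; lra.
Qed.

Definition coweight i := if long (sr i) then 1 else rm^-1.

Lemma coweight_gt0 i : 0 < coweight i.
Proof. by rewrite /coweight; case: ifP; rewrite ?invr_gt0 ?rmax_gt0. Qed.

Lemma htvE g : htv G Phi g = \sum_i g i 0 * coweight i.
Proof. by apply: eq_bigr => i _; rewrite /coweight; case: ifP; rewrite ?mulr1. Qed.

Lemma htvN g : htv G Phi (- g) = - htv G Phi g.
Proof. by rewrite !htvE -sumrN; apply: eq_bigr => i _; rewrite mxE mulNr. Qed.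

Lemma htv_sroot i : htv G Phi (sr i) = coweight i.
Proof.
rewrite htvE (bigD1 i) //= sroot_coord eqxx mul1r big1 ?addr0 // => j /negbTE hj.
by rewrite sroot_coord hj mul0r.
Qed.

(* The weights of [htv] are [sq (sr i) / rm]: this is where short simple
   roots having squared length one is needed. *)
Lemma cartan_coweight i v : cartan (sr i) v * coweight i = 2 * fm (sr i) v / rm.
Proof.
rewrite /coweight /cartan; case: ifP => [/longrootP [_ ->]|/negbT/sqlen_short_sroot ->].
  by rewrite mulr1.
by rewrite invr1 mulr1.
Qed.

Lemma htv_sref i v : htv G Phi (s i *m v) = htv G Phi v - 2 * fm (sr i) v / rm.
Proof.
rewrite !htvE -cartan_coweight (bigD1 i) //= [in RHS](bigD1 i) //= sref_coord eqxx.
rewrite (eq_bigr (fun j => v j 0 * coweight j)) => [|j /negbTE hj]; first by ring.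
by rewrite sref_coord hj subr0.
Qed.

Lemma htv_le u v : (forall i, u i 0 <= v i 0) -> htv G Phi u <= htv G Phi v.
Proof. by move=> h; rewrite !htvE; apply: ler_sum => i _; rewrite ler_pM2r ?coweight_gt0. Qed.

Lemma htv_posroot_gt0 v : pos v -> 0 < htv G Phi v.
Proof.
case/posrootP => hv hc; have [i hi] := nonzero_coord (root_neq0 hv).
rewrite htvE (bigD1 i) //= ltr_pwDl ?mulr_gt0 ?coweight_gt0 ?lt_def ?hi ?hc //.
by apply: sumr_ge0 => j _; rewrite mulr_ge0 ?hc // ltW ?coweight_gt0.
Qed.

Lemma htv_negroot_lt0 v : neg v -> htv G Phi v < 0.
Proof. by rewrite -posrootN -oppr_gt0 -htvN; apply: htv_posroot_gt0. Qed.

(** * Levels and simple paths *)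

Variable ah : 'cV[R]_n.
Hypothesis Hhi : is_highest_root Phi ah.

Local Notation L := (level G Phi ah).

Lemma level_sroot i : long (sr i) -> L (- sr i) = L (sr i) + 1.
Proof.
move=> hl; rewrite /level htvN htv_sroot /coweight hl posrootN.
by rewrite negrootE ?sroot_root // sroot_pos /=; ring.
Qed.

(* For a long root [v], the Cartan integer [2 (sr i | v) / rm] lies in
   {-1, 0, 1} unless [v = sr i] or [v = - sr i]. *)
Lemma level_sref i v : long v -> L (s i *m v) = L v + Num.sg (fm (sr i) v).
Proof.
move=> hv; have /longrootP [hvP hsq] := hv; have hi := sroot_root i.
have hA := sqlen_root_gt0 hi.
case: (eqVneq v (sr i)) => [ev|h1].
  by subst v; rewrite sref_sroot level_sroot // (gtr0_sg hA).
case: (eqVneq v (- sr i)) => [ev|h2].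
  have hl : long (sr i) by rewrite -[sr i]opprK -ev longN.
  subst v; rewrite mulmxN sref_sroot opprK level_sroot // formNr sgrN (gtr0_sg hA).
  by rewrite addrK.
have hc : cartan v (sr i) = -1 \/ cartan v (sr i) = 0 \/ cartan v (sr i) = 1.
  by apply: cartan_longer; rewrite ?hsq ?le_rmax.
rewrite /level sref_sign // htv_sref.
have -> : 2 * fm (sr i) v / rm = cartan v (sr i) by rewrite /cartan hsq form_sym.
rewrite form_sym -sgr_cartan //.
by case: hc => [|[|]] ->; rewrite ?sgrN1 ?sgr0 ?sgr1; ring.
Qed.

Lemma highest_root : ah \in Phi.
Proof. by case: Hhi. Qed.

Lemma le_highest_root b : b \in Phi -> forall i, b i 0 <= ah i 0.
Proof. by case: Hhi => _ h /h. Qed.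

Lemma highest_root_subr_ge0 b : b \in Phi -> forall i, 0 <= (ah - b) i 0.
Proof. by move=> hb i; rewrite 2!mxE subr_ge0 le_highest_root. Qed.

Lemma highest_posroot : pos ah.
Proof.
apply/posrootP; split=> [|i]; first exact: highest_root.
by apply: le_trans (le_highest_root (sroot_root i) i); rewrite sroot_coord ler0n.
Qed.

Definition dominant v := [forall i, 0 <= fm (sr i) v].

Lemma dominantP v : reflect (forall i, 0 <= fm (sr i) v) (dominant v).
Proof. exact: forallP. Qed.

Lemma highest_dominant : dominant ah.
Proof.
apply/dominantP => i; rewrite leNgt; apply/negP => hlt.
have hc : cartan (sr i) ah < 0 by rewrite cartan_lt0 ?sroot_root.
by have := le_highest_root (sref_root i highest_root) i; rewrite sref_coord eqxx; lra.
Qed.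

Lemma form_dominant_ge0 u v : (forall i, 0 <= u i 0) -> dominant v -> 0 <= fm u v.
Proof.
by move=> hu /dominantP hv; rewrite form_coord; apply: sumr_ge0 => i _; rewrite mulr_ge0.
Qed.

Lemma dominant_ind (P : 'cV[R]_n -> Prop) :
  (forall v, v \in Phi -> dominant v -> P v) ->
  (forall v i, v \in Phi -> fm (sr i) v < 0 -> P (s i *m v) -> P v) ->
  forall v, v \in Phi -> P v.
Proof.
move=> hdom hstep; apply: (int_measure_ind (m := fun v => height ah - height v)).
  move=> v hv; split; first exact/is_intB/height_root_int/hv/height_root_int/highest_root.
  by rewrite subr_ge0 ler_sum // => i _; apply: le_highest_root.
move=> v hv IH; case: (boolP (dominant v)) => [|/forallPn [i]]; first exact: hdom.
rewrite -ltNge => hi; apply: (hstep v i) => //; apply: IH; first exact: sref_root.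
have : cartan (sr i) v < 0 by rewrite cartan_lt0 ?sroot_root.
move/(is_int_le_m1 (cartan_root_int (sroot_root i) hv)).
by rewrite height_sref; lra.
Qed.

Lemma highest_long : long ah.
Proof.
apply/longrootP; split; first exact: highest_root.
apply/eqP; rewrite eq_le le_rmax ?highest_root //=.
have [c hc <-] := rmax_attained.
have [ws hd] : exists ws, dominant (W ws *m c).
  move: c hc; apply: dominant_ind => [v _ hd|v i _ _ [ws hd]]; first by exists [::]; rewrite mul1mx.
  by exists (rcons ws i); rewrite wordmx_rcons -mulmxA.
rewrite -(sqlen_word ws); set c' := W ws *m c in hd *.
have hdiff := highest_root_subr_ge0 (word_root ws hc).
have h1 := form_dominant_ge0 hdiff hd; have h2 := form_dominant_ge0 hdiff highest_dominant.
rewrite formBl -/(sq c') in h1; rewrite formBl -/(sq ah) form_sym in h2; lra.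
Qed.

Lemma dominant_long_highest v : long v -> dominant v -> v = ah.
Proof.
move=> /longrootP [hv hsq] hd; have /longrootP [_ hah] := highest_long.
have hdiff := highest_root_subr_ge0 hv.
have h1 := form_dominant_ge0 hdiff hd; rewrite formBl -/(sq v) hsq in h1.
apply/esym/eqP; rewrite -subr_eq0 -sqlen_eq0 eq_le sqlen_ge0 andbT.
by rewrite /sqlen formBl !formBr -/(sq ah) -/(sq v) hsq hah [fm v ah]form_sym; lra.
Qed.

Lemma level_highest : L ah = 0.
Proof. by rewrite /level highest_posroot subrr subr0. Qed.

Lemma spath_rcons b gs a i : spath G Phi ah b gs a ->
  L (s i *m a) = L a + 1 -> spath G Phi ah b (rcons gs i) (s i *m a).
Proof.
elim: gs b => [|g gs IH] b /= => [[hb <-] hL|[hb [hL hp]] hL2]; last by do !split => //; apply: IH.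
by do !split => //; apply: long_sref.
Qed.

Lemma spath_rconsP b gs i a : spath G Phi ah b (rcons gs i) a ->
  exists a0, [/\ spath G Phi ah b gs a0, a = s i *m a0 & L a = L a0 + 1].
Proof.
elim: gs b => [|g gs IH] b /= => [[hb [hL [hb' e]]]|[hb [hL /IH [a0 [h1 h2 h3]]]]].
  by exists b; rewrite -e.
by exists a0.
Qed.

Lemma spath_word b gs a : spath G Phi ah b gs a ->
  [/\ long b, long a, W (rev gs) *m b = a & L a = L b + (size gs)%:R].
Proof.
elim: gs b => [|g gs IH] b /= => [[hb <-]|[hb [hL /IH [h1 h2 h3 h4]]]].
  by rewrite mul1mx addr0.
split=> //; first by rewrite rev_cons wordmx_rcons -mulmxA.
by rewrite h4 hL -natr1; ring.
Qed.

Lemma spath_from_highest v : long v -> exists gs, spath G Phi ah ah gs v.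
Proof.
move=> hv; have /longrootP [hvP _] := hv; move: v hvP hv.
apply: dominant_ind => [v _ hd hv|v i hvP hi IH hv].
  by exists [::]; rewrite (dominant_long_highest hv hd); split=> //; apply: highest_long.
have [gs hgs] := IH (long_sref i hv).
exists (rcons gs i); rewrite -(sref_involutive i v); apply: spath_rcons => //.
by rewrite level_sref ?long_sref // -form_sref_swap sref_sroot formNl sgrN ltr0_sg ?opprK.
Qed.

Lemma level_nat v : long v -> exists k : nat, L v = k%:R.
Proof.
move=> /spath_from_highest [gs /spath_word [_ _ _ ->]].
by exists (size gs); rewrite level_highest add0r.
Qed.

Lemma level_ge0 v : long v -> 0 <= L v.
Proof. by move=> /level_nat [k ->]; rewrite ler0n. Qed.

Lemma level_word_bound ws b : long b -> `|L (W ws *m b) - L b| <= (size ws)%:R.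
Proof.
move=> hb; elim: ws => [|i ws IH] /=; first by rewrite mul1mx subrr normr0.
rewrite -mulmxA level_sref ?long_word // -natr1 addrAC.
by apply: le_trans (ler_normD _ _) _; rewrite lerD ?normr_sg_le1.
Qed.

Lemma level_diff_le_length a b x : long b -> inW G Phi x -> x *m b = a ->
  `|L a - L b| <= (lengthW G x)%:R.
Proof.
move=> hb /inW_word [ws ->] <-.
have [ws' <- <-] := lengthW_spec ws; exact: level_word_bound.
Qed.

(* Each letter changes the level by at most one, so here every letter raises it. *)
Lemma word_spath ws b : long b -> L (W ws *m b) = L b + (size ws)%:R ->
  spath G Phi ah b (rev ws) (W ws *m b).
Proof.
move=> hb; elim: ws => [|i ws IH] /= => [_|e]; first by rewrite mul1mx.
have hws := level_word_bound ws hb; have hl := long_word ws hb.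
have := normr_sg_le1 (fm (sr i) (W ws *m b)).
move: e hws; rewrite -mulmxA level_sref // -natr1 !ler_norml => e /andP [h1 h2] /andP [h3 h4].
rewrite rev_cons; apply: spath_rcons; last by rewrite level_sref //; lra.
by apply: IH; lra.
Qed.

(** * The elements x_ab *)

Lemma spath_inversions gs v : spath G Phi ah ah gs v ->
  forall g, pos g -> neg (W gs *m g) -> fm v g < 0.
Proof.
elim/last_ind: gs v => [|gs i IH] v.
  by move=> _ g hg; rewrite mul1mx => hn; move: (posroot_neg hg); rewrite hn.
move=> /spath_rconsP [a0 [hp -> hL]] g hg; have [_ ha0 _ _] := spath_word hp.
rewrite wordmx_rcons -mulmxA form_sref_swap.
case: (eqVneq g (sr i)) => [->|hne]; last by move=> hn; apply: IH; rewrite ?sref_pos.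
move=> _; rewrite sref_sroot formNr oppr_lt0 form_sym -sgr_cp0.
by move: hL; rewrite level_sref // => /addrI ->.
Qed.

Lemma word_highest_inversions ws v : W ws *m ah = v ->
  forall g, pos g -> fm v g < 0 -> neg (W (rev ws) *m g).
Proof.
move=> <- g hg; rewrite form_word_swap => hlt.
case: (root_posVneg (word_root (rev ws) (posroot_root hg))) => // /posrootP [_ hc].
by have := form_dominant_ge0 hc highest_dominant; rewrite form_sym leNgt hlt.
Qed.

(* A minimal word sending [ah] to [v] is a simple path, and [ah] is dominant. *)
Lemma minimal_word_highest_inversions ws v : long v -> W ws *m ah = v ->
  (lengthW G (W ws))%:R = L v ->
  exists2 ws', W ws' = W ws & forall g, pos g -> neg (W (rev ws') *m g) = (fm v g < 0).
Proof.
move=> hv hx hl; have [ws' e1 e2] := lengthW_spec ws; exists ws' => // g hg.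
have hp : spath G Phi ah ah (rev ws') v.
  rewrite -hx -e1; apply: word_spath; first exact: highest_long.
  by rewrite e1 hx level_highest add0r e2.
apply/idP/idP; first exact: (spath_inversions hp).
by apply: word_highest_inversions => //; rewrite e1.
Qed.

Lemma minimal_word_highest_unique ws1 ws2 v : long v ->
  W ws1 *m ah = v -> W ws2 *m ah = v ->
  (lengthW G (W ws1))%:R = L v -> (lengthW G (W ws2))%:R = L v -> W ws1 = W ws2.
Proof.
move=> hv h1 h2 l1 l2.
have [ws1' <- p1] := minimal_word_highest_inversions hv h1 l1.
have [ws2' <- p2] := minimal_word_highest_inversions hv h2 l2.
rewrite -(revK ws1') -(revK ws2'); apply: wordmx_rev_eq.
by apply: inversions_determine => g hg; rewrite p1 // p2.
Qed.

(* Prolonging by a simple path from [ah] to [b] reduces to the case [b = ah]. *)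
Lemma minimal_word_unique a b ws1 ws2 : long a -> long b -> L b <= L a ->
  W ws1 *m b = a -> W ws2 *m b = a ->
  (lengthW G (W ws1))%:R = L a - L b -> (lengthW G (W ws2))%:R = L a - L b ->
  W ws1 = W ws2.
Proof.
move=> ha hb hba h1 h2 l1 l2.
have [zs hz] := spath_from_highest hb; have [_ _ hzb] := spath_word hz.
rewrite level_highest add0r => hLb.
have prolong ws : W ws *m b = a -> (lengthW G (W ws))%:R = L a - L b ->
    W (ws ++ rev zs) *m ah = a /\ (lengthW G (W (ws ++ rev zs)))%:R = L a.
  move=> hw lw; have hmap : W (ws ++ rev zs) *m ah = a by rewrite wordmx_cat -mulmxA hzb.
  split=> //; apply/eqP; rewrite eq_le; apply/andP; split.
    rewrite wordmx_cat -[L a](subrK (L b)) -lw hLb -natrD ler_nat.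
    by apply: leq_trans (lengthW_mul _ _) _; rewrite leq_add2l -size_rev lengthW_le.
  have := level_diff_le_length highest_long (word_inW (ws ++ rev zs)) hmap.
  by rewrite level_highest subr0 ger0_norm ?level_ge0.
have [e1 l1'] := prolong _ h1 l1; have [e2 l2'] := prolong _ h2 l2.
have e := minimal_word_highest_unique ha e1 e2 l1' l2'.
apply: mulmx_colP => v; move/(congr1 (fun M => M *m (W zs *m v))): e.
by rewrite !wordmx_cat -!mulmxA word_revK.
Qed.

Lemma xab_unique a b x y : long a -> long b ->
  is_xab G Phi ah a b x -> is_xab G Phi ah a b y -> x = y.
Proof.
move=> ha hb [/inW_word [wsx ->] [hx lx]] [/inW_word [wsy ->] [hy ly]].
case: (lerP (L b) (L a)) => hab.
  rewrite ger0_norm ?subr_ge0 // in lx ly; exact: (minimal_word_unique ha hb hab).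
rewrite ltr0_norm ?subr_lt0 // opprB -(lengthW_rev wsx) in lx.
rewrite ltr0_norm ?subr_lt0 // opprB -(lengthW_rev wsy) in ly.
have hx' : W (rev wsx) *m a = b by rewrite -hx word_revK.
have hy' : W (rev wsy) *m a = b by rewrite -hy word_revK.
rewrite -(revK wsx) -(revK wsy); apply: wordmx_rev_eq.
exact: (minimal_word_unique hb ha (ltW hab) hx' hy').
Qed.

Lemma spath_xab b gs a : spath G Phi ah b gs a -> is_xab G Phi ah a b (W (rev gs)).
Proof.
move=> hp; have [hb ha hx hL] := spath_word hp.
have hge := level_diff_le_length hb (word_inW (rev gs)) hx.
do !split => //; first exact: word_inW.
apply/eqP; rewrite eq_le hge andbT.
by rewrite hL addrC addKr ger0_norm ?ler0n // ler_nat -(size_rev gs) lengthW_le.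
Qed.

Lemma spath_xab_rev a gs b : spath G Phi ah a gs b -> is_xab G Phi ah a b (W gs).
Proof.
move=> hp; have [ha hb hx hL] := spath_word hp.
have hx' : W gs *m b = a by rewrite -hx -{1}(revK gs) word_revK.
have hge := level_diff_le_length hb (word_inW gs) hx'.
do !split => //; first exact: word_inW.
apply/eqP; rewrite eq_le hge andbT.
by rewrite hL distrC addrC addKr ger0_norm ?ler0n // ler_nat lengthW_le.
Qed.

Lemma xab_spath a b : long a -> long b ->
  (exists x, is_xab G Phi ah a b x) <->
  ((exists gs, spath G Phi ah b gs a) \/ (exists gs, spath G Phi ah a gs b)).
Proof.
move=> ha hb; split=> [[x [/inW_word [ws ->] [hx lx]]]|[[gs hp]|[gs hp]]].
- have [ws' e1 e2] := lengthW_spec ws; rewrite -e1 in hx; rewrite -e2 in lx.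
  case: (lerP (L b) (L a)) => hab.
    left; exists (rev ws'); rewrite -hx; apply: word_spath => //.
    by rewrite hx lx ger0_norm ?subr_ge0 // addrC subrK.
  right; exists ws'; have hx' : W (rev ws') *m a = b by rewrite -hx word_revK.
  rewrite -hx' -{1}(revK ws'); apply: word_spath => //.
  by rewrite hx' size_rev lx distrC ger0_norm ?subr_ge0 ?(ltW hab) // addrC subrK.
- by exists (W (rev gs)); apply: spath_xab.
- by exists (W gs); apply: spath_xab_rev.
Qed.

Lemma spath_reduced_expr a b x : long a -> long b -> is_xab G Phi ah a b x ->
  (exists gs, spath G Phi ah b gs a) ->
  forall gs, spath G Phi ah b gs a <-> reduced_expr G x (rev gs).
Proof.
move=> ha hb hx [gs0 /spath_word [_ _ _ hL0]] gs.
have hab : L b <= L a by rewrite hL0 lerDl ler0n.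
have [_ [hxb lx]] := hx; rewrite ger0_norm ?subr_ge0 // in lx.
split=> [hp|[e1 e2]].
  have hy := spath_xab hp; rewrite -(xab_unique ha hb hy hx); split=> //.
  case: hy => _ [_]; have [_ _ _ ->] := spath_word hp.
  by rewrite addrC addKr ger0_norm ?ler0n // size_rev => /eqP; rewrite eqr_nat => /eqP.
rewrite -(revK gs) -hxb -e1; apply: word_spath => //.
by rewrite e1 hxb e2 lx addrC subrK.
Qed.

Lemma level_le_root u v : long u -> long v -> le_root u v -> L v <= L u.
Proof.
move=> hu hv huv; have hh := htv_le huv.
have [hu' hv'] : u \in Phi /\ v \in Phi by case/longrootP: hu; case/longrootP: hv.
rewrite /level; case hpu: (pos u); case hpv: (pos v); rewrite ?subr0; try lra.
(* Only [L v < L u + 1] is immediate here; integrality of levels concludes. *)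
have hnu : neg u by rewrite negrootE ?hpu.
have h1 := htv_posroot_gt0 hpv; have h2 := htv_negroot_lt0 hnu.
have [k1 e1] := level_nat hu; have [k2 e2] := level_nat hv.
move: e1 e2; rewrite /level hpu hpv subr0 => e1 e2.
have : (k2 < k1.+1)%N by rewrite -(ltr_nat R) -natr1 -e1 -e2; lra.
by rewrite ltnS -(ler_nat R) -e1 -e2.
Qed.

Lemma xab_mul a b c x1 x2 : long a -> long b -> long c ->
  le_root a b -> le_root b c ->
  is_xab G Phi ah a b x1 -> is_xab G Phi ah b c x2 ->
  is_xab G Phi ah a c (x1 *m x2) /\
  lengthW G (x1 *m x2) = (lengthW G x1 + lengthW G x2)%N.
Proof.
move=> ha hb hc hab hbc [/inW_word [ws1 ->] [h1 l1]] [/inW_word [ws2 ->] [h2 l2]].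
have mab := level_le_root ha hb hab; have mbc := level_le_root hb hc hbc.
have mac : L c <= L a := le_trans mbc mab.
rewrite ger0_norm ?subr_ge0 // in l1; rewrite ger0_norm ?subr_ge0 // in l2.
have hm : W ws1 *m W ws2 *m c = a by rewrite -mulmxA h2.
have hw : inW G Phi (W ws1 *m W ws2) by rewrite -wordmx_cat; apply: word_inW.
have hge := level_diff_le_length hc hw hm.
rewrite ger0_norm ?subr_ge0 // in hge.
have hle : ((lengthW G (W ws1 *m W ws2))%:R : R) <= L a - L c.
  have -> : L a - L c = (lengthW G (W ws1) + lengthW G (W ws2))%:R by rewrite natrD l1 l2; ring.
  by rewrite ler_nat lengthW_mul.
have eR : ((lengthW G (W ws1 *m W ws2))%:R : R) = L a - L c.
  by apply/eqP; rewrite eq_le hle hge.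
split; first by do !split => //; rewrite eR ger0_norm // subr_ge0.
by apply/eqP; rewrite -(eqr_nat R) natrD eR l1 l2; apply/eqP; ring.
Qed.

Lemma long_posroot_word a : long a -> pos a ->
  exists ws j, a = W ws *m sr j /\ (size ws)%:R = htv G Phi a - 1.
Proof.
move=> hl ha; move: a ha hl; apply: posroot_ind => [j hl|a i ha hne hi IH hl].
  by exists [::], j; rewrite mul1mx htv_sroot /coweight hl subrr.
have [ws [j [e hs]]] := IH (long_sref i hl).
exists (i :: ws), j; split; first by rewrite /= -mulmxA -e sref_involutive.
have := level_sref i hl; rewrite gtr0_sg // /level sref_pos // ha.
by rewrite /= -natr1 hs; lra.
Qed.

Lemma xab_refl a : long a -> pos a -> is_xab G Phi ah (- a) a (refl G a).
Proof.
move=> hl ha; have haP := posroot_root ha.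
have [ws [j [e hs]]] := long_posroot_word hl ha; set ws' := ws ++ j :: rev ws.
have hw : refl G a = W ws' by rewrite e reflE_word.
have hx : W ws' *m a = - a by rewrite -hw refl_self ?sqlen_root_neq0.
have eL : L (- a) - L a = 2 * htv G Phi a - 1.
  by rewrite /level ha posrootN (negrootE haP) ha htvN /=; ring.
have hge := level_diff_le_length hl (word_inW ws') hx.
rewrite hw; do !split => //; first exact: word_inW.
apply/eqP; rewrite eq_le hge andbT eL ger0_norm; last by move: (ler0n R (size ws)); rewrite hs; lra.
apply: le_trans (_ : (size ws')%:R <= _); first by rewrite ler_nat lengthW_le.
by rewrite size_cat /= size_rev -addSnnS natrD -natr1 hs; lra.
Qed.

Lemma posroot_I_orthogonal g : posroot_I G Phi ah g -> fm ah g = 0.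
Proof.
move=> /andP [_ /forallP hI]; rewrite form_sym form_coord big1 // => i _.
have := hI i; case: (boolP (Itilde G ah i)) => [/eqP hi _|_ /eqP ->]; last by rewrite mul0r.
by rewrite form_sym hi mulr0.
Qed.

Lemma posroot_I_of_orthogonal g : pos g -> fm ah g = 0 -> posroot_I G Phi ah g.
Proof.
move=> hg h0; apply/andP; split=> //; have /posrootP [_ hc] := hg.
apply/forallP => i; apply/implyP => hi.
have hterm j : true -> 0 <= g j 0 * fm (sr j) ah.
  by move=> _; rewrite mulr_ge0 ?hc //; apply/dominantP/highest_dominant.
rewrite form_sym form_coord in h0.
have /eqP := psumr_eq0P hterm h0 (i := i) isT; rewrite mulf_eq0 => /orP [//|hf].
by move: hi; rewrite /Itilde form_sym hf.
Qed.

Lemma spath_inX gs a : spath G Phi ah ah gs a -> inX G Phi ah (W (rev gs)).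
Proof.
move=> hp; have [_ ha hx _] := spath_word hp; split=> [|g hgI]; first exact: word_inW.
have hg : pos g by case/andP: hgI.
case: (root_posVneg (word_root (rev gs) (posroot_root hg))) => // hn.
have hb : pos (- (W (rev gs) *m g)) by rewrite posrootN.
have hnb : neg (W gs *m - (W (rev gs) *m g)) by rewrite mulmxN word_Krev negrootN.
have := spath_inversions hp hb hnb.
by rewrite -hx formNr word_preserves_form posroot_I_orthogonal // oppr0 ltxx.
Qed.

(* The positive roots orthogonal to [ah] are those of [Phi_I], which
   elements of [X_I] keep positive. *)
Lemma inX_highest_inversions ws a : inX G Phi ah (W ws) -> W ws *m ah = a ->
  forall g, pos g -> neg (W (rev ws) *m g) = (fm a g < 0).
Proof.
move=> [_ hX] hxa g hg; apply/idP/idP; last exact: word_highest_inversions.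
move=> hn; rewrite -hxa form_word_swap; set g' := W (rev ws) *m g in hn *.
have hpg : pos (- g') by rewrite posrootN.
have := form_dominant_ge0 (proj2 (posrootP _ hpg)) highest_dominant.
rewrite formNl form_sym oppr_ge0 le_eqVlt => /orP [/eqP h0|//].
have hI : posroot_I G Phi ah (- g') by rewrite posroot_I_of_orthogonal // formNr h0 oppr0.
have := hX _ hI; rewrite mulmxN /g' word_Krev posrootN => hnb.
by move: (posroot_neg hg); rewrite hnb.
Qed.

Lemma xab_highest a : long a ->
  (exists x, inX G Phi ah x /\ x *m ah = a /\ is_xab G Phi ah a ah x) /\
  (forall x, inX G Phi ah x -> x *m ah = a -> is_xab G Phi ah a ah x).
Proof.
move=> ha; have [gs hp] := spath_from_highest ha; have [_ _ hx _] := spath_word hp.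
split; first by exists (W (rev gs)); split; [exact: spath_inX hp | split; last exact: spath_xab hp].
move=> x hX hxa; have [ws ex] := inW_word (proj1 hX); subst x.
suff -> : W ws = W (rev gs) by apply: spath_xab.
rewrite -(revK ws); apply: wordmx_rev_eq.
apply: inversions_determine => g hg; rewrite (inX_highest_inversions hX hxa) //.
apply/idP/idP; last exact: (spath_inversions hp).
by rewrite -{1}(revK gs); apply: word_highest_inversions.
Qed.

End RootSystem.

Theorem proposition1p12 (R : realFieldType) (n : nat) (G : 'M[R]_n)
  (Phi : seq 'cV[R]_n) (ah : 'cV[R]_n) :
  is_irr_reduced_root_system_with_basis G Phi ->
  min_sqlen_one G Phi ->
  is_highest_root Phi ah ->
  (* (a) *)
  (forall a b x, longroot G Phi a -> longroot G Phi b ->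
     inW G Phi x -> x *m b = a ->
     `|level G Phi ah a - level G Phi ah b| <= (lengthW G x)%:R) /\
  (* (b) *)
  (forall a b, longroot G Phi a -> longroot G Phi b ->
     ((exists x, is_xab G Phi ah a b x) <->
        ((exists gs, spath G Phi ah b gs a) \/ (exists gs, spath G Phi ah a gs b))) /\
     (forall x y, is_xab G Phi ah a b x -> is_xab G Phi ah a b y -> x = y) /\
     (forall x, is_xab G Phi ah a b x -> (exists gs, spath G Phi ah b gs a) ->
        forall gs, spath G Phi ah b gs a <-> reduced_expr G x (rev gs))) /\
  (* (c) *)
  (forall a b c x1 x2, longroot G Phi a -> longroot G Phi b -> longroot G Phi c ->
     le_root a b -> le_root b c ->
     is_xab G Phi ah a b x1 -> is_xab G Phi ah b c x2 ->
     is_xab G Phi ah a c (x1 *m x2) /\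
     lengthW G (x1 *m x2) = (lengthW G x1 + lengthW G x2)%N) /\
  (* (d) *)
  (forall a, longroot G Phi a -> posroot Phi a -> is_xab G Phi ah (- a) a (refl G a)) /\
  (* (e) *)
  (forall a, longroot G Phi a ->
     (exists x, inX G Phi ah x /\ x *m ah = a /\ is_xab G Phi ah a ah x) /\
     (forall x, inX G Phi ah x -> x *m ah = a -> is_xab G Phi ah a ah x)).
Proof.
move=> HRS Hmin Hhi.
have G_sym : G^T = G by case: HRS => _ [].
have G_pos : forall v, v != 0 -> 0 < sqlen G v by case: HRS => _ [_ []].
split; first by move=> a b x _ hb; apply: level_diff_le_length.
split.
  move=> a b ha hb; split; first exact: xab_spath.
  split; first by move=> x y; apply: xab_unique.
  by move=> x; apply: spath_reduced_expr.
split; first by move=> a b c x1 x2; apply: xab_mul.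
split; first by move=> a; apply: xab_refl.
by move=> a; apply: xab_highest.
Qed.
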